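(* For all integers $k,m,\lambda\ge0$ there exists $n\ge0$ with the following property. Let $A_1,\dots,A_n,B_1,\dots,B_n$ be pairwise disjoint subsets of the vertex set of a graph $G$, each of cardinality $m$. Then either there exist $A\subseteq A_1\cup\dots\cup A_n$ and $B\subseteq B_1\cup\dots\cup B_n$ with $|A|=|B|=\lambda$ such that no vertex of $A$ has a neighbour in $B$; or there exist $I,J\subseteq\{1,\dots,n\}$ with $|I|=|J|=k$ such that $\bigcup_{i\in I}A_i$ is $G$-complete with $\bigcup_{j\in J}B_j$.
   Context: For a graph $G$ and $A,B\subseteq V(G)$, $A$ is $G$-complete with $B$ if $A\cap B=\emptyset$ and every vertex of $A$ is adjacent to every vertex of $B$. *)

From mathcomp Require Import all_boot.
Set Implicit Arguments. Unset Strict Implicit. Unset Printing Implicit Defensive.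

Definition simple_graph (T : finType) (e : rel T) : Prop :=
  symmetric e /\ irreflexive e.

Definition complete_with (T : finType) (e : rel T) (A B : {set T}) : Prop :=
  A :&: B = set0 /\ (forall x y, x \in A -> y \in B -> e x y).

From mathcomp Require Import all_boot.
Set Implicit Arguments. Unset Strict Implicit. Unset Printing Implicit Defensive.

(* Number the vertices of each A_i and of each B_j by 0..m-1. A bipartite
   Ramsey argument on the n x n grid, coloured at (i, j) by a pair of positions
   (p, q) whose vertices in A_i and B_j are non-adjacent (or by "none" if A_i
   is complete to B_j), yields index sets I, J of size max(k, lambda) with a
   constant colour. If that colour is "none", A_I is complete to B_J; if it is
   (p, q), the p-th vertices of the A_i (i in I) and the q-th vertices of the
   B_j (j in J) are two anticomplete sets of size lambda. *)

Lemma subset_card_exists (T : finType) (S : {set T}) N :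
  N <= #|S| -> exists2 S' : {set T}, S' \subset S & #|S'| = N.
Proof.
move=> le_N_S; exists [set x in take N (enum S)].
  by apply/subsetP => x; rewrite inE => /mem_take; rewrite mem_enum.
rewrite cardsE (card_uniqP _) ?take_uniq ?enum_uniq // size_take -cardE.
by case: ltngtP le_N_S.
Qed.

Lemma pigeonhole_fiber (X Y : finType) (f : X -> Y) N :
  #|Y| * N < #|X| -> exists y, N <= #|[set x | f x == y]|.
Proof.
move=> lt_YN_X.
have [y Ny | small] := pickP (fun y => N <= #|[set x | f x == y]|).
  by exists y.
have fibers : #|X| = \sum_(y : Y) #|[set x | f x == y]|.
  rewrite -sum1_card (partition_big f predT) //=.
  by apply: eq_bigr => y _; rewrite sum1dep_card cardsE.
move: lt_YN_X; rewrite fibers -sum_nat_const ltnNge leq_sum // => y _.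
by rewrite ltnW // ltnNge small.
Qed.

(* Rows are restricted to the first r indices so that the colour profile of a
   column ranges over a finite set small enough for the pigeonhole principle. *)
Lemma bipartite_ramsey (C : finType) (N : nat) :
  exists n, forall c : 'I_n -> 'I_n -> C,
  exists I J : {set 'I_n}, exists col : C,
    [/\ #|I| = N, #|J| = N & {in I & J, forall i j, c i j = col}].
Proof.
pose r := (#|C| * N).+1.
exists (#|{ffun 'I_r -> C}| * N + r) => c.
have le_r_n : r <= #|{ffun 'I_r -> C}| * N + r by apply: leq_addl.
pose row (t : 'I_r) := widen_ord le_r_n t.
pose profile j := [ffun t => c (row t) j].
have [v Nv] : exists v, N <= #|[set j | profile j == v]|.
  by apply: pigeonhole_fiber; rewrite card_ord -{1}[_ * N]addn0 ltn_add2l.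
have [col Ncol] : exists col, N <= #|[set t | v t == col]|.
  by apply: pigeonhole_fiber; rewrite card_ord ltnSn.
have [J sJ cardJ] := subset_card_exists Nv.
have [R sR cardR] := subset_card_exists Ncol.
exists (row @: R), J, col; split => //.
  by rewrite card_imset // => t t' /(congr1 val) eq_tt'; apply: val_inj.
move=> _ j /imsetP[t tR ->] jJ.
move: (subsetP sJ j jJ) (subsetP sR t tR); rewrite !inE => /eqP <- /eqP <-.
by rewrite ffunE.
Qed.

Section EnumerateBySize.
Variables (T : finType) (m : nat) (S : {set T}).
Hypothesis cardS : #|S| = m.

Definition enum_at (p : 'I_m) : T := enum_val (cast_ord (esym cardS) p).

Lemma enum_atP p : enum_at p \in S.
Proof. exact: enum_valP. Qed.

Lemma enum_at_onto x : x \in S -> exists p, enum_at p = x.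
Proof.
move=> xS; exists (cast_ord cardS (enum_rank_in xS x)).
by rewrite /enum_at cast_ordK enum_rankK_in.
Qed.

End EnumerateBySize.

Lemma transversal_imset (I T : finType) (F : I -> {set T}) (f : I -> T)
    (K : {set I}) :
  (forall i j, i != j -> F i :&: F j = set0) -> (forall i, f i \in F i) ->
  f @: K \subset \bigcup_i F i /\ #|f @: K| = #|K|.
Proof.
move=> disjF fF; split.
  by apply/subsetP => _ /imsetP[i _ ->]; apply/bigcupP; exists i.
rewrite card_imset // => i j fij; apply/eqP; apply: contraT => neq_ij.
by move/setP/(_ (f i)): (disjF _ _ neq_ij); rewrite inE in_set0 fF fij fF.
Qed.

Section NonedgeColouring.
Variables (T : finType) (e : rel T) (m n : nat) (A B : 'I_n -> {set T}).
Hypotheses (cardA : forall i, #|A i| = m) (cardB : forall j, #|B j| = m).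

Let a i := enum_at (cardA i).
Let b j := enum_at (cardB j).

Definition nonedge_colour i j : option ('I_m * 'I_m) :=
  [pick pq | ~~ e (a i pq.1) (b j pq.2)].

Lemma nonedge_colour_some (I J : {set 'I_n}) p q :
  {in I & J, forall i j, nonedge_colour i j = Some (p, q)} ->
  forall x y, x \in a^~ p @: I -> y \in b^~ q @: J -> ~~ e x y.
Proof.
move=> colIJ _ _ /imsetP[i iI ->] /imsetP[j jJ ->].
move: (colIJ i j iI jJ); rewrite /nonedge_colour.
by case: pickP => // -[p' q'] ? [<- <-].
Qed.

Lemma nonedge_colour_none (I J : {set 'I_n}) :
  {in I & J, forall i j, nonedge_colour i j = None} ->
  forall x y, x \in \bigcup_(i in I) A i -> y \in \bigcup_(j in J) B j -> e x y.
Proof.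
move=> colIJ x y /bigcupP[i iI xA] /bigcupP[j jJ yB].
have [[p <-] [q <-]] := (enum_at_onto (cardA i) xA, enum_at_onto (cardB j) yB).
move: (colIJ i j iI jJ); rewrite /nonedge_colour; case: pickP => // none _.
by move: (none (p, q)) => /= /negbFE.
Qed.

End NonedgeColouring.

Theorem theorem3p1 :
  forall k m lambda : nat, exists n : nat,
  forall (T : finType) (e : rel T), simple_graph e ->
  forall (A B : 'I_n -> {set T}),
    (forall i j : 'I_n, i != j -> A i :&: A j = set0) ->
    (forall i j : 'I_n, i != j -> B i :&: B j = set0) ->
    (forall i j : 'I_n, A i :&: B j = set0) ->
    (forall i : 'I_n, #|A i| = m) ->
    (forall i : 'I_n, #|B i| = m) ->
    (exists (A' B' : {set T}),
        A' \subset \bigcup_(i < n) A i /\ B' \subset \bigcup_(i < n) B i /\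
        #|A'| = lambda /\ #|B'| = lambda /\
        (forall x y, x \in A' -> y \in B' -> ~~ e x y))
    \/
    (exists (I J : {set 'I_n}),
        #|I| = k /\ #|J| = k /\
        complete_with e (\bigcup_(i in I) A i) (\bigcup_(j in J) B j)).
Proof.
move=> k m lambda.
have [n ramsey] := bipartite_ramsey (option ('I_m * 'I_m)) (maxn k lambda).
exists n => T e _ A B disjA disjB disjAB cardA cardB.
have [I [J [col [cardI cardJ colIJ]]]] := ramsey (nonedge_colour e cardA cardB).
have shrink (K : {set 'I_n}) (N : nat) :
    #|K| = maxn k lambda -> N <= maxn k lambda ->
    exists2 K' : {set 'I_n}, K' \subset K & #|K'| = N.
  by move=> <-; exact: subset_card_exists.
case: col colIJ => [[p q]|] colIJ.
- have [I' sI' cardI'] := shrink I lambda cardI (leq_maxr _ _).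
  have [J' sJ' cardJ'] := shrink J lambda cardJ (leq_maxr _ _).
  have [subA' cardA'] := transversal_imset I' disjA (fun i => enum_atP (cardA i) p).
  have [subB' cardB'] := transversal_imset J' disjB (fun j => enum_atP (cardB j) q).
  left; exists [set enum_at (cardA i) p | i in I'],
               [set enum_at (cardB j) q | j in J'].
  rewrite cardA' cardB'; do !split => //.
  apply: nonedge_colour_some => i j iI' jJ'.
  exact: colIJ (subsetP sI' i iI') (subsetP sJ' j jJ').
- have [I' sI' cardI'] := shrink I k cardI (leq_maxl _ _).
  have [J' sJ' cardJ'] := shrink J k cardJ (leq_maxl _ _).
  right; exists I', J'; do !split => //.
    apply/eqP; rewrite setI_eq0 bigcup_disjoint // => i _.
    rewrite disjoint_sym bigcup_disjoint // => j _.
    by rewrite -setI_eq0 setIC disjAB.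
  apply: (@nonedge_colour_none _ e _ _ A B cardA cardB) => i j iI' jJ'.
  exact: colIJ (subsetP sI' i iI') (subsetP sJ' j jJ').
Qed.
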